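(* Let $n\ge 2$ and let $V$ be an $n$-element subset of $\mathbb R$ that is optimal for $3$-term arithmetic progressions. Then at least one of the two $(n-1)$-element sets $V\setminus\{\min V\}$ and $V\setminus\{\max V\}$ is optimal for $3$-term arithmetic progressions.
   Context: A $k$-term arithmetic progression is a set $\{a,a+d,\dots,a+(k-1)d\}\subseteq\mathbb R$ with $d>0$; $S_{\mathcal A_k}(V)$ is the number of $k$-term arithmetic progressions contained in $V$. An $m$-set $V$ is optimal for $k$-term arithmetic progressions if $S_{\mathcal A_k}(V)$ equals the maximum of $S_{\mathcal A_k}(W)$ over all $m$-subsets $W\subseteq\mathbb R$, namely $(m-r)(m+r-k+1)/(2k-2)$ where $r$ is the remainder of $m$ modulo $k-1$. *)

(* Finite subsets of the reals are represented by
   duplicate-free sequences over an arbitrary real field R. *)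
From HB Require Import structures.
From mathcomp Require Import all_boot all_order all_algebra.
Set Implicit Arguments. Unset Strict Implicit. Unset Printing Implicit Defensive.
Import Order.TTheory GRing.Theory Num.Theory.
Local Open Scope ring_scope.

(* The k-term AP {a, a+d, ..., a+(k-1)d} (d > 0) contained in V is
   determined by its first two terms a < b := a + d, both in V.  Hence
   S_{A_k}(V) = number of pairs (a,b) of elements of V with a < b and
   a + i*(b-a) in V for all i < k (valid for k >= 2). *)
Definition is_kAP {R : realFieldType} (k : nat) (V : seq R) (a b : R) : bool :=
  (a < b) && all (fun i => a + (b - a) *+ i \in V) (iota 0 k).

Definition S_AP {R : realFieldType} (k : nat) (V : seq R) : nat :=
  size [seq p <- [seq (a, b) | a <- V, b <- V] | is_kAP k V p.1 p.2].

Definition optimal_AP {R : realFieldType} (k : nat) (V : seq R) : Prop :=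
  forall W : seq R, uniq W -> size W = size V -> (S_AP k W <= S_AP k V)%N.

Definition drop_min {R : realFieldType} (V : seq R) : seq R :=
  [seq x <- V | has (fun y => y < x) V].

Definition drop_max {R : realFieldType} (V : seq R) : seq R :=
  [seq x <- V | has (fun y => x < y) V].

From HB Require Import structures.
From mathcomp Require Import all_boot all_order all_algebra.
From mathcomp Require Import ring lra zify.
Set Implicit Arguments. Unset Strict Implicit. Unset Printing Implicit Defensive.
Import Order.TTheory GRing.Theory Num.Theory.

(* Count the 3-term progressions of V by their first two terms a < b, the third
   being 2b - a.  Deleting the maximum x of V loses the progressions ending at x,
   deleting the minimum y those starting at y.  Indexed by their middle term b,
   these are disjoint unless b = (x + y)/2, and b can be neither x nor y, so the
   two losses add up to at most |V| - 1 and one of them is at most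
   floor((|V| - 1)/2).  By induction no m-set has more than ap3_max m
   progressions, a bound attained by {0, ..., m - 1}; hence for an optimal V the
   cheaper deletion leaves a set reaching the bound for |V| - 1. *)

Lemma seq_max_exists (disp : Order.disp_t) (T : orderType disp) (s : seq T) : s != [::] ->
  exists2 x, x \in s & forall z, z \in s -> (z <= x)%O.
Proof.
elim: s => [//|a s IH] _; case: (eqVneq s [::]) => [->|/IH [x xs hx]].
  by exists a; rewrite ?mem_head // => z; rewrite inE => /eqP->.
have [ax|xa] := leP a x.
  by exists x; rewrite ?inE ?xs ?orbT // => z; rewrite inE => /predU1P[->|/hx].
exists a; rewrite ?mem_head // => z; rewrite inE => /predU1P[->//|/hx zx].
exact: le_trans zx (ltW xa).
Qed.

Lemma seq_min_exists (disp : Order.disp_t) (T : orderType disp) (s : seq T) : s != [::] ->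
  exists2 y, y \in s & forall z, z \in s -> (y <= z)%O.
Proof. exact: (@seq_max_exists _ T^d). Qed.

Lemma count_sumE (T : Type) (p : pred T) (s : seq T) :
  count p s = \sum_(x <- s) p x.
Proof. by elim: s => [|x s IH]; rewrite ?big_nil ?big_cons //= IH. Qed.

Lemma count_iota_double_ge m : count (fun i => m <= i.*2) (iota 0 m) = m./2.
Proof.
have -> : iota 0 m = iota 0 (uphalf m) ++ iota (uphalf m) m./2.
  by rewrite -iotaD uphalf_half -addnA addnn odd_double_half.
rewrite count_cat (eq_in_count (a2 := pred0)) ?count_pred0 => [|i]; last first.
  by rewrite mem_iota -leq_uphalf_double => /andP[_ /ltn_geF].
rewrite (eq_in_count (a2 := predT)) ?count_predT ?size_iota // => i.
by rewrite mem_iota -leq_uphalf_double => /andP[].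
Qed.

(* ap3_max m = (m - r)(m + r - 2)/4 with r = m mod 2. *)
Fixpoint ap3_max (m : nat) : nat := if m is k.+1 then ap3_max k + k./2 else 0.

Local Open Scope ring_scope.

Section ThreeTermProgressions.
Variable R : realFieldType.
Implicit Types (V W : seq R) (a b x y : R).

Definition ap3_pair V a b := (a < b) && (b *+ 2 - a \in V).

Definition ap3 V : nat := \sum_(a <- V) \sum_(b <- V) ap3_pair V a b.

Definition ap3_top x V := count (fun b => (b < x) && (b *+ 2 - x \in V)) V.
Definition ap3_bottom y V := count (fun b => (y < b) && (b *+ 2 - y \in V)) V.

Lemma S_AP3E V : S_AP 3 V = ap3 V.
Proof.
rewrite /S_AP size_filter count_flatten sumnE !big_map /ap3.
apply: eq_big_seq => a aV; rewrite count_map count_sumE; apply: eq_big_seq => b bV.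
rewrite /is_kAP /ap3_pair /= mulr0n addr0 mulr1n (addrC a) subrK aV bV andbT.
by rewrite (_ : a + (b - a) *+ 2 = b *+ 2 - a) // !mulr2n; ring.
Qed.

Lemma perm_ap3 V W : perm_eq V W -> ap3 V = ap3 W.
Proof.
move=> pVW; rewrite /ap3 (perm_big _ pVW); apply: eq_bigr => a _.
by rewrite (perm_big _ pVW); apply: eq_bigr => b _; rewrite /ap3_pair (perm_mem pVW).
Qed.

Lemma count_ap3_first V x b : uniq V ->
  count (fun a => (a < b) && (b *+ 2 - a == x)) V = (b < x) && (b *+ 2 - x \in V).
Proof.
move=> uV; set c := b *+ 2 - x.
have mid_eq a : (b *+ 2 - a == x) = (a == c).
  by rewrite /c; apply/eqP/eqP => [<-|->]; rewrite !mulr2n; ring.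
under eq_count do rewrite mid_eq.
have [bx|xb] := ltP b x.
  rewrite (eq_count (a2 := pred1 c)) ?count_uniq_mem // => a /=.
  by case: (a =P c) => [->|_]; rewrite ?andbF // andbT /c mulr2n; lra.
rewrite (eq_count (a2 := pred0)) ?count_pred0 // => a /=.
by case: (a =P c) => [->|_]; rewrite ?andbF // andbT /c mulr2n; lra.
Qed.

Lemma ap3_cons_max x V : uniq V -> (forall b, b \in V -> b < x) ->
  ap3 (x :: V) = (ap3 V + ap3_top x V)%N.
Proof.
move=> uV Vx; have xV : x \notin V by apply/negP => /Vx; rewrite ltxx.
rewrite /ap3 big_cons big1_seq ?add0n; last first.
  by move=> b /andP[_]; rewrite /ap3_pair inE => /predU1P[->|/Vx bx]; rewrite ?ltxx // lt_gtF.
have split_last a : a \in V -> (\sum_(b <- x :: V) ap3_pair (x :: V) a b =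
    \sum_(b <- V) ap3_pair V a b + \sum_(b <- V) ((a < b) && (b *+ 2 - a == x))%R)%N.
  move=> aV; rewrite big_cons -big_split /= /ap3_pair inE.
  have ax := Vx a aV; have x_lt : x < x *+ 2 - a by rewrite mulr2n; lra.
  have xaV : (x *+ 2 - a \in V) = false by apply/negP => /Vx; rewrite ltNge ltW.
  rewrite ax gt_eqF //= xaV add0n.
  apply: eq_big_seq => b bV; rewrite inE.
  case: (b *+ 2 - a =P x) => [->|_]; case: (a < b) => //=; by rewrite ?(negPf xV) ?addn0.
rewrite (eq_big_seq _ split_last) big_split /=; congr (_ + _)%N.
rewrite /ap3_top count_sumE exchange_big /=; apply: eq_big_seq => b bV.
by rewrite -count_sumE count_ap3_first.
Qed.

Lemma ap3_cons_min y V : (forall b, b \in V -> y < b) ->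
  ap3 (y :: V) = (ap3 V + ap3_bottom y V)%N.
Proof.
move=> yV; rewrite /ap3 big_cons big_cons addnC /ap3_pair ltxx add0n; congr (_ + _)%N.
  apply: eq_big_seq => a aV; rewrite big_cons lt_gtF ?yV // add0n.
  apply: eq_big_seq => b bV; rewrite inE; case ab: (a < b) => //=.
  have ya := yV a aV; have : y < b *+ 2 - a by rewrite mulr2n; lra.
  by move/gt_eqF->.
rewrite /ap3_bottom count_sumE; apply: eq_big_seq => b bV.
have yb := yV b bV; have : y < b *+ 2 - y by rewrite mulr2n; lra.
by rewrite inE yb => /gt_eqF->.
Qed.

Lemma drop_maxE V x : uniq V -> x \in V -> (forall z, z \in V -> z <= x) ->
  drop_max V = rem x V.
Proof.
move=> uV xV Vx; rewrite rem_filter //; apply: eq_in_filter => z zV /=.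
case: (eqVneq z x) => [->|zx].
  by apply/negbTE/hasPn => w /Vx; rewrite leNgt => /negbTE->.
by apply/hasP; exists x; rewrite // lt_neqAle zx Vx.
Qed.

Lemma drop_minE V y : uniq V -> y \in V -> (forall z, z \in V -> y <= z) ->
  drop_min V = rem y V.
Proof.
move=> uV yV Vy; rewrite rem_filter //; apply: eq_in_filter => z zV /=.
case: (eqVneq z y) => [->|zy].
  by apply/negbTE/hasPn => w /Vy; rewrite leNgt => /negbTE->.
by apply/hasP; exists y; rewrite // lt_neqAle eq_sym zy Vy.
Qed.

Lemma drop_max_lt V x b : (forall z, z \in V -> z <= x) -> b \in drop_max V -> b < x.
Proof. by move=> Vx; rewrite mem_filter => /andP[/hasP[z /Vx zx bz] _]; exact: lt_le_trans zx. Qed.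

Lemma drop_min_gt V y b : (forall z, z \in V -> y <= z) -> b \in drop_min V -> y < b.
Proof. by move=> Vy; rewrite mem_filter => /andP[/hasP[z /Vy yz zb] _]; exact: le_lt_trans zb. Qed.

Lemma ap3_drop_max V x : uniq V -> x \in V -> (forall z, z \in V -> z <= x) ->
  ap3 V = (ap3 (drop_max V) + ap3_top x (drop_max V))%N.
Proof.
move=> uV xV Vx; rewrite (perm_ap3 (perm_to_rem xV)) -drop_maxE //.
by rewrite ap3_cons_max ?filter_uniq // => b; apply: drop_max_lt.
Qed.

Lemma ap3_drop_min V y : uniq V -> y \in V -> (forall z, z \in V -> y <= z) ->
  ap3 V = (ap3 (drop_min V) + ap3_bottom y (drop_min V))%N.
Proof.
move=> uV yV Vy; rewrite (perm_ap3 (perm_to_rem yV)) -drop_minE //.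
by rewrite ap3_cons_min // => b; apply: drop_min_gt.
Qed.

Lemma size_drop_max V : uniq V -> size (drop_max V) = (size V).-1.
Proof.
case: (eqVneq V [::]) => [->//|/seq_max_exists[x xV Vx] uV].
by rewrite (drop_maxE uV xV Vx) size_rem.
Qed.

Lemma size_drop_min V : uniq V -> size (drop_min V) = (size V).-1.
Proof.
case: (eqVneq V [::]) => [->//|/seq_min_exists[y yV Vy] uV].
by rewrite (drop_minE uV yV Vy) size_rem.
Qed.

Lemma uniq_drop_max V : uniq V -> uniq (drop_max V).
Proof. exact: filter_uniq. Qed.

Lemma uniq_drop_min V : uniq V -> uniq (drop_min V).
Proof. exact: filter_uniq. Qed.

(* A middle term b serves a progression ending at x and one starting at y only
   when b is the midpoint of [y, x]; b = x and b = y serve neither. *)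
Lemma ap3_ends_middle_le V x y b : y < x -> (forall z, z \in V -> y <= z <= x) ->
  y <= b <= x ->
  (((b < x) && (b *+ 2 - x \in V))%R + ((y < b) && (b *+ 2 - y \in V))%R +
    (b == x) + (b == y) <= 1 + (b *+ 2 == x + y)%R)%N.
Proof.
move=> yx Vyx /andP[yb bx]; have inV z : z \in V -> y <= z /\ z <= x by move/Vyx/andP.
case: (eqVneq b x) => [->|nbx].
  suff -> : (x *+ 2 - y \in V) = false by rewrite ltxx gt_eqF ?andbF.
  by apply/negP => /inV[_]; rewrite mulr2n; lra.
case: (eqVneq b y) => [->|nby].
  suff -> : (y *+ 2 - x \in V) = false by rewrite ltxx andbF.
  by apply/negP => /inV[+ _]; rewrite mulr2n; lra.
rewrite !addn0 !lt_neqAle nbx eq_sym nby bx yb /=.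
case: (boolP (b *+ 2 - x \in V)) => [/inV[lo _]|_]; last by case: (_ \in V).
case: (boolP (b *+ 2 - y \in V)) => [/inV[_ hi]|//].
suff -> : b *+ 2 = x + y by rewrite eqxx.
by apply/eqP; rewrite eq_le; move: lo hi; rewrite mulr2n => lo hi; apply/andP; split; lra.
Qed.

Lemma ap3_top_filter x p V : (ap3_top x (filter p V) <= ap3_top x V)%N.
Proof.
rewrite /ap3_top count_filter; apply: sub_count => b /= /andP[/andP[-> +] _].
by rewrite mem_filter => /andP[].
Qed.

Lemma ap3_bottom_filter y p V : (ap3_bottom y (filter p V) <= ap3_bottom y V)%N.
Proof.
rewrite /ap3_bottom count_filter; apply: sub_count => b /= /andP[/andP[-> +] _].
by rewrite mem_filter => /andP[].
Qed.

Lemma ap3_top_bottom_le V x y : uniq V -> x \in V -> y \in V -> y < x ->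
  (forall z, z \in V -> y <= z <= x) ->
  (ap3_top x V + ap3_bottom y V <= (size V).-1)%N.
Proof.
move=> uV xV yV yx Vyx.
have mid_le : (count (fun b => b *+ 2 == x + y)%R V <= 1)%N.
  rewrite (eq_count (a2 := pred1 ((x + y) / 2))) ?count_uniq_mem ?leq_b1 // => b /=.
  by apply/eqP/eqP => [<-|->]; rewrite mulr2n; field.
have := @leq_sum _ V (mem V) _ _ (fun b bV => ap3_ends_middle_le yx Vyx (Vyx b bV)).
rewrite -!big_seq !big_split /= -!count_sumE sum1_size !(count_uniq_mem _ uV) xV yV.
rewrite -/(ap3_top x V) -/(ap3_bottom y V); lia.
Qed.

Lemma ap3_drop_end V : uniq V -> (2 <= size V)%N ->
  exists V', [/\ V' = drop_min V \/ V' = drop_max V, uniq V', size V' = (size V).-1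
    & (ap3 V <= ap3 V' + (size V).-1./2)%N].
Proof.
move=> uV V2; have V0 : V != [::] by apply: contraTneq V2 => ->.
have [x xV Vx] := seq_max_exists V0; have [y yV Vy] := seq_min_exists V0.
have /hasP[z zV _] : has predT (drop_max V).
  by rewrite has_predT size_drop_max // ltn_predRL.
have yx : y < x.
  by apply: le_lt_trans (drop_max_lt Vx zV); apply: Vy; move: zV; rewrite mem_filter => /andP[].
have Vyx w : w \in V -> y <= w <= x by move=> wV; rewrite Vy ?Vx.
have losses := ap3_top_bottom_le uV xV yV yx Vyx.
have top_le : (ap3_top x (drop_max V) <= ap3_top x V)%N by apply: ap3_top_filter.
have bottom_le : (ap3_bottom y (drop_min V) <= ap3_bottom y V)%N by apply: ap3_bottom_filter.
have := odd_double_half (size V).-1; have := leq_b1 (odd (size V).-1).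
rewrite -addnn; set k := (size V).-1; set h := k./2 => odd_le1 k_halves.
have [top_small|top_big] := leqP (ap3_top x (drop_max V)) h.
  exists (drop_max V); split; rewrite ?size_drop_max ?uniq_drop_max //; first by right.
  by rewrite (ap3_drop_max uV xV Vx) leq_add2l.
exists (drop_min V); split; rewrite ?size_drop_min ?uniq_drop_min //; first by left.
rewrite (ap3_drop_min uV yV Vy) leq_add2l; lia.
Qed.

Lemma ap3_le_max m W : uniq W -> size W = m -> (ap3 W <= ap3_max m)%N.
Proof.
elim: m W => [|[|k] IH] W uW sW.
- by case: W uW sW => // _ _; rewrite /ap3 big_nil.
- by case: W uW sW => [|w []] // _ _; rewrite /ap3 !big_cons !big_nil /ap3_pair ltxx.
have /(ap3_drop_end uW)[W' [_ uW' sW' le]] : (2 <= size W)%N by rewrite sW.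
rewrite sW /= in sW' le; apply: leq_trans le _.
by rewrite leq_add2r; apply: IH.
Qed.

Definition progression m : seq R := [seq i%:R | i <- iota 0 m].

Lemma progression_uniq m : uniq (progression m).
Proof. by rewrite map_inj_uniq ?iota_uniq // => i j /eqP; rewrite eqr_nat => /eqP. Qed.

Lemma ap3_max_le_progression m : (ap3_max m <= ap3 (progression m))%N.
Proof.
elim: m => //= m IH.
have -> : progression m.+1 = rcons (progression m) m%:R.
  by rewrite /progression -addn1 iotaD map_cat cats1.
have lt_m b : b \in progression m -> b < m%:R.
  by case/mapP => i; rewrite mem_iota => /andP[_ im] ->; rewrite ltr_nat.
rewrite (@perm_ap3 _ (m%:R :: progression m)) ?perm_rcons //.
rewrite ap3_cons_max ?progression_uniq //.
apply: leq_add => //; rewrite -count_iota_double_ge /ap3_top count_map.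
rewrite -(@eq_in_count _ (fun i => (i < m) && (m <= i.*2))%N (fun i => m <= i.*2)%N)
  => [|i]; last by rewrite mem_iota => /andP[_ ->].
apply: sub_count => i /andP[im mi] /=.
rewrite ltr_nat im; apply/mapP; exists (i.*2 - m)%N; first by rewrite mem_iota; lia.
by rewrite natrB // -addnn natrD mulr2n.
Qed.

End ThreeTermProgressions.

Theorem mainTheorem9 (R : realFieldType) (n : nat) (V : seq R) :
  (2 <= n)%N -> uniq V -> size V = n -> optimal_AP 3 V ->
  optimal_AP 3 (drop_min V) \/ optimal_AP 3 (drop_max V).
Proof.
move=> n2 uV sV optV.
have V_ge : (ap3_max n <= ap3 V)%N.
  apply: leq_trans (ap3_max_le_progression R n) _; rewrite -!S_AP3E.
  by apply: optV; rewrite ?progression_uniq // size_map size_iota sV.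
have /(ap3_drop_end uV)[V' [hV' _ sV' le]] : (2 <= size V)%N by rewrite sV.
have optV' : optimal_AP 3 V'.
  move=> W uW sW; rewrite !S_AP3E; apply: leq_trans (ap3_le_max uW (etrans sW sV')) _.
  rewrite sV in le *; case: n n2 sV V_ge le => // k _ _ /= V_ge le; lia.
by case: hV' => <-; [left | right].
Qed.
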